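(* Fix integers $d_1,d_2\ge0$ and $a_1,a_2\ge0$, and let $(S_1,S_2)$ be a compatible pair on $D_{a_1,a_2}$ with $S_1(h)\le d_1$ for all $h\in D_1$ and $S_2(v)\le d_2$ for all $v\in D_2$. (a) If $0\le d_2a_2\le a_1$, then $(|S_1|,|S_2|)$ lies in the (possibly degenerate) trapezoid that is the convex hull of $(0,0)$, $(d_1a_1,0)$, $(0,d_2a_2)$, $(d_1a_1-d_1d_2a_2,d_2a_2)$. (b) If $0\le d_1a_1\le a_2$, then $(|S_1|,|S_2|)$ lies in the (possibly degenerate) trapezoid that is the convex hull of $(0,0)$, $(d_1a_1,0)$, $(0,d_2a_2)$, $(d_1a_1,d_2a_2-d_1d_2a_1)$. (c) If $0<a_1<d_2a_2$ and $0<a_2<d_1a_1$, then $(|S_1|,|S_2|)$ lies in the non-convex quadrilateral with corner vertices $(0,0)$, $(d_1a_1,0)$, $(a_2,a_1)$, $(0,d_2a_2)$ (closed region bounded by the polygon $(0,0)\to(d_1a_1,0)\to(a_2,a_1)\to(0,d_2a_2)\to(0,0)$), where the boundary segments $[(0,0),(d_1a_1,0)]$ and $[(0,0),(0,d_2a_2)]$ are included while the boundary segments $((d_1a_1,0),(a_2,a_1)]$ and $((0,d_2a_2),(a_2,a_1)]$ are excluded.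
   Context: Maximal Dyck path: $D=D_{a_1,a_2}$ is the lattice path of unit East and North steps from $(0,0)$ to $(a_1,a_2)$ staying weakly below the diagonal of $[0,a_1]\times[0,a_2]$ and closest to it. $D_1$, $D_2$ are its sets of horizontal and vertical edges. Identify $(0,0)\equiv(a_1,a_2)$ so $D$ is a cyclic sequence of edges; for edges $e,e'$, $ee'$ is the subpath from $e$ to $e'$ inclusive following $D$ cyclically, and $(ee')_1,(ee')_2$ are its horizontal and vertical edges. Gradings $S_1:D_1\to\mathbb{Z}_{\ge0}$, $S_2:D_2\to\mathbb{Z}_{\ge0}$ form a compatible pair if for every $h\in D_1$, $v\in D_2$ there is an edge $e$ with either $he$ a proper subpath of $hv$ and $|(he)_2|=\sum_{h'\in(he)_1}S_1(h')$, or $ev$ a proper subpath of $hv$ and $|(ev)_1|=\sum_{v'\in(ev)_2}S_2(v')$. $|S_i|$ denotes the sum of the values of $S_i$. *)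

From mathcomp Require Import all_boot all_order all_algebra.
Set Implicit Arguments. Unset Strict Implicit. Unset Printing Implicit Defensive.
Import Order.TTheory GRing.Theory Num.Theory.

(* A path is encoded as the sequence of its edges in order starting at (0,0):
   [true] = North (vertical) unit step, [false] = East (horizontal) unit step.
   The maximal Dyck path is the highest lattice path weakly below the segment
   from (0,0) to (a1,a2); it is produced greedily: from the current lattice
   point (x,y), step North whenever (x,y+1) is still weakly below the diagonal,
   i.e. (y+1)*a1 <= a2*x (and y < a2), otherwise step East. *)
Fixpoint dyck_aux (fuel x y a1 a2 : nat) : seq bool :=
  match fuel with
  | 0 => [::]
  | f.+1 =>
      if (y < a2) && (y.+1 * a1 <= a2 * x) then true :: dyck_aux f x y.+1 a1 a2
      else false :: dyck_aux f x.+1 y a1 a2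
  end.

Definition dyck (a1 a2 : nat) : seq bool := dyck_aux (a1 + a2) 0 0 a1 a2.

(* Edges of D are the positions 0 .. n-1, n = size (dyck a1 a2) = a1 + a2. *)
Definition nedges (a1 a2 : nat) : nat := size (dyck a1 a2).
Definition is_vert (a1 a2 : nat) (e : nat) : bool :=
  (e < nedges a1 a2) && nth false (dyck a1 a2) e.
Definition is_horiz (a1 a2 : nat) (e : nat) : bool :=
  (e < nedges a1 a2) && ~~ nth false (dyck a1 a2) e.

(* Cyclic subpath e e' (from e to e' inclusive, following D cyclically,
   with (0,0) identified with (a1,a2)); as a sequence of edge positions. *)
Definition subpath (a1 a2 : nat) (e e' : nat) : seq nat :=
  let n := nedges a1 a2 in
  [seq (e + k) %% n | k <- iota 0 ((e' + n - e) %% n).+1].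

Definition proper_subpath (p q : seq nat) : bool := infix p q && (p != q).

Definition nvert (a1 a2 : nat) (s : seq nat) : nat := count (is_vert a1 a2) s.
Definition nhoriz (a1 a2 : nat) (s : seq nat) : nat := count (is_horiz a1 a2) s.

(* Gradings S1 : D1 -> Z_{>=0}, S2 : D2 -> Z_{>=0} are represented by functions
   nat -> nat; only their values on horizontal (resp. vertical) edges matter. *)
Definition compatible (a1 a2 : nat) (S1 S2 : nat -> nat) : Prop :=
  forall h v, is_horiz a1 a2 h -> is_vert a1 a2 v ->
  exists e, e < nedges a1 a2 /\
    ((proper_subpath (subpath a1 a2 h e) (subpath a1 a2 h v) /\
      nvert a1 a2 (subpath a1 a2 h e)
        = \sum_(h' <- subpath a1 a2 h e | is_horiz a1 a2 h') S1 h')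
     \/
     (proper_subpath (subpath a1 a2 e v) (subpath a1 a2 h v) /\
      nhoriz a1 a2 (subpath a1 a2 e v)
        = \sum_(v' <- subpath a1 a2 e v | is_vert a1 a2 v') S2 v')).

Definition norm1 (a1 a2 : nat) (S1 : nat -> nat) : nat :=
  \sum_(h < nedges a1 a2 | is_horiz a1 a2 h) S1 h.
Definition norm2 (a1 a2 : nat) (S2 : nat -> nat) : nat :=
  \sum_(v < nedges a1 a2 | is_vert a1 a2 v) S2 v.

Local Open Scope ring_scope.

Definition pt := (rat * rat)%type.

Definition in_conv_hull (pts : seq pt) (p : pt) : Prop :=
  exists w : nat -> rat,
    (forall i, 0 <= w i) /\
    \sum_(i < size pts) w i = 1 /\
    p.1 = \sum_(i < size pts) w i * (nth (0, 0) pts i).1 /\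
    p.2 = \sum_(i < size pts) w i * (nth (0, 0) pts i).2.

Definition in_hoseg (a b p : pt) : Prop :=
  exists t : rat, 0 < t <= 1 /\
    p.1 = (1 - t) * a.1 + t * b.1 /\ p.2 = (1 - t) * a.2 + t * b.2.

(* Closed region bounded by the simple polygon A -> B -> C -> D -> A, where
   A = (0,0), B on the positive x-axis, C in the open positive quadrant,
   D on the positive y-axis.  The polygon is star-shaped from A with its
   vertices in angular order, so the region is the union of the triangles
   ABC and ACD. *)
Definition in_quad (A B C D p : pt) : Prop :=
  in_conv_hull [:: A; B; C] p \/ in_conv_hull [:: A; C; D] p.

Definition region_c (d1 d2 a1 a2 : nat) (p : pt) : Prop :=
  let A : pt := (0, 0) in
  let B : pt := ((d1 * a1)%:R, 0) in
  let C : pt := (a2%:R, a1%:R) in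
  let D : pt := (0, (d2 * a2)%:R) in
  in_quad A B C D p /\ ~ in_hoseg B C p /\ ~ in_hoseg D C p.

From mathcomp Require Import all_boot all_order all_algebra.
From mathcomp Require Import zify ring lra.
Set Implicit Arguments. Unset Strict Implicit. Unset Printing Implicit Defensive.
Import Order.TTheory GRing.Theory Num.Theory.
Local Open Scope ring_scope.

(* Read D cyclically as a periodic walk whose j-th step is the j-th edge, weighted by its
   grading. Let gapV be the S2-weight of the vertical steps minus the number of horizontal
   steps, and gapH the S1-weight of the horizontal steps minus the number of vertical ones.
   On this walk compatibility says: between a horizontal step h and a later vertical step v,
   either gapH comes back to its value at h, or gapV at v+1 equals its value at some step
   after h. Hence every excursion of gapV below a maximum (started by a horizontal step,
   ended by the first return) makes gapH drop strictly. Starting a period at a maximum of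
   gapV splits it into steps that do not raise gapV and such excursions, and a linear
   potential that does not decrease on any of these pieces yields each inequality between
   |S1|, |S2|, a1, a2, d1, d2. That D is the maximal Dyck path, i.e. 0 <= a2 x - a1 y <
   a1 + a2 at each of its lattice points (x, y), limits the vertical steps inside an
   excursion. Reversing D and exchanging the two kinds of edges gives D_{a2,a1}, hence the
   symmetric inequalities; (a), (b) and (c) are then plane geometry. *)

(** * Prefix sums and extrema *)

Lemma periodic_mod (T : Type) (f : nat -> T) n :
  (forall j, f (j + n)%N = f j) -> forall j, f j = f (j %% n)%N.
Proof.
move=> per j; rewrite {1}(divn_eq j n) addnC.
by elim: (j %/ n)%N => [|k IH]; rewrite ?mul0n ?addn0 // mulSn addnCA addnC per.
Qed.

Lemma ex_argmax_first (f : nat -> int) a b : (a <= b)%N -> exists2 p, (a <= p <= b)%N &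
  (forall q, (a <= q <= b)%N -> f q <= f p) /\ (forall q, (a <= q < p)%N -> f q < f p).
Proof.
move=> /subnKC <-; elim: (b - a)%N => [|m [p p_in [pmax pfirst]]].
  exists a; rewrite ?addn0 ?leqnn //.
  by split=> q q_in; [have -> : q = a by lia | lia].
have [le_new_p | lt_p_new] := leP (f (a + m.+1)%N) (f p).
- exists p; first lia.
  split=> [q q_in|]; last exact: pfirst.
  have [q_old | ->] : (q <= a + m)%N \/ q = (a + m.+1)%N by lia.
    by apply: pmax; lia.
  by [].
- exists (a + m.+1)%N; first lia.
  split=> q q_in; last by have := pmax q ltac:(lia); lia.
  have [q_old | ->] : (q <= a + m)%N \/ q = (a + m.+1)%N by lia.
    by have := pmax q ltac:(lia); lia.
  by [].
Qed.

Lemma ex_argmin_last (f : nat -> int) a b : (a <= b)%N -> exists2 p, (a <= p <= b)%N &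
  (forall q, (a <= q <= b)%N -> f p <= f q) /\ (forall q, (p < q <= b)%N -> f p < f q).
Proof.
move=> ab; have [p p_in [pmax pfirst]] :=
  @ex_argmax_first (fun q => - f (a + b - q)%N) a b ab.
exists (a + b - p)%N; first lia.
split=> q q_in.
  by have := pmax (a + b - q)%N; rewrite (_ : (a + b - (a + b - q) = q)%N); lia.
by have := pfirst (a + b - q)%N; rewrite (_ : (a + b - (a + b - q) = q)%N); lia.
Qed.

Definition psum (f : nat -> int) (q : nat) : int := \sum_(0 <= j < q) f j.

Lemma psum0 f : psum f 0 = 0.
Proof. by rewrite /psum big_geq. Qed.

Lemma psumS f q : psum f q.+1 = psum f q + f q.
Proof. exact: big_nat_recr. Qed.

Lemma psumB f i t : (i <= t)%N -> psum f t - psum f i = \sum_(i <= j < t) f j.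
Proof. by move=> it; rewrite /psum (@big_cat_nat _ _ _ i 0 t _ _ (leq0n i) it) addrC addKr. Qed.

Lemma ler_psumB f g i t : (i <= t)%N -> (forall j, (i <= j < t)%N -> f j <= g j) ->
  psum f t - psum f i <= psum g t - psum g i.
Proof. by move=> it fg; rewrite !psumB // ler_sum_nat. Qed.

Lemma psum_add_period f n q : (forall j, f (j + n)%N = f j) ->
  psum f (q + n) = psum f q + psum f n.
Proof.
move=> per; elim: q => [|q IH]; first by rewrite psum0 add0r.
by rewrite addSn !psumS IH per addrAC.
Qed.

Lemma psum_rev f c q : (q <= c.+1)%N ->
  psum (fun j => f (c - j)%N) q = psum f c.+1 - psum f (c.+1 - q).
Proof.
elim: q => [|q IH] qc; first by rewrite psum0 subn0 subrr.
rewrite psumS IH 1?ltnW // (_ : (c.+1 - q = (c - q).+1)%N) ?psumS; first (rewrite subSS; ring).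
lia.
Qed.

Lemma psum_gt0_witness f n : 0 < psum f n -> exists2 j, (j < n)%N & 0 < f j.
Proof.
elim: n => [|n IH]; first by rewrite psum0.
rewrite psumS; have [fn_gt0 _ | fn_le0 sum_gt0] := ltrP 0 (f n); first by exists n.
by have [|j jn fj] := IH; [lia | exists j; first exact: ltnW].
Qed.

Lemma first_return_or_below (f : nat -> int) lo hi :
  (exists2 t, (lo < t <= hi)%N & f lo <= f t /\ forall q, (lo < q < t)%N -> f q < f lo)
  \/ (forall q, (lo < q <= hi)%N -> f q < f lo).
Proof.
case: (boolP (has (fun q => f lo <= f q) (iota lo.+1 (hi - lo)))) => [ret | noret]; [left | right].
- have ex_ret : exists q, (lo < q <= hi)%N && (f lo <= f q).
    by move/hasP: ret => [q]; rewrite mem_iota => q_in q_ret; exists q; rewrite q_ret andbT; lia.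
  case: (ex_minnP ex_ret) => t /andP[t_in t_ret] t_first; exists t => //; split=> // q q_in.
  by rewrite ltNge; apply/negP=> q_ret; have := t_first q ltac:(rewrite q_ret andbT; lia); lia.
- move=> q q_in; rewrite ltNge; apply/negP=> q_ret; move/hasPn: noret => /(_ q).
  by rewrite mem_iota q_ret => /(_ ltac:(lia)).
Qed.

(** * Walks, gaps and excursions *)

Section Walk.
Variables (vert : nat -> bool) (wt : nat -> nat).

Definition walk_sum (g : bool -> nat -> nat) : nat -> int :=
  psum (fun j => (g (vert j) (wt j))%:Z).

Definition nV := walk_sum (fun b _ => b : nat).
Definition nH := walk_sum (fun b _ => ~~ b : nat).
Definition wV := walk_sum (fun b w => if b then w else 0%N).
Definition wH := walk_sum (fun b w => if b then 0%N else w).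

Lemma walk_sum0 g : walk_sum g 0 = 0.
Proof. exact: psum0. Qed.

Lemma walk_sum_mono g i t : (i <= t)%N -> walk_sum g i <= walk_sum g t.
Proof. by move=> it; rewrite -subr_ge0 /walk_sum psumB // sumr_ge0. Qed.

Lemma wH_le_nH d i t : (i <= t)%N -> (forall j, (i <= j < t)%N -> ~~ vert j -> (wt j <= d)%N) ->
  wH t - wH i <= d%:Z * (nH t - nH i).
Proof.
move=> it wt_le; rewrite /wH /nH /walk_sum mulrBr /psum !mulr_sumr -!/(psum _ _).
by apply: ler_psumB => // j /[dup] j_in /wt_le; case: (vert j) => /=; lia.
Qed.

Lemma wV_le_nV d i t : (i <= t)%N -> (forall j, (i <= j < t)%N -> vert j -> (wt j <= d)%N) ->
  wV t - wV i <= d%:Z * (nV t - nV i).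
Proof.
move=> it wt_le; rewrite /wV /nV /walk_sum mulrBr /psum !mulr_sumr -!/(psum _ _).
by apply: ler_psumB => // j /[dup] j_in /wt_le; case: (vert j) => /=; lia.
Qed.

Lemma nVS q : nV q.+1 = nV q + (vert q : nat)%:Z.
Proof. exact: psumS. Qed.

Lemma nHS q : nH q.+1 = nH q + (~~ vert q : nat)%:Z.
Proof. exact: psumS. Qed.

Lemma wVS q : wV q.+1 = wV q + (if vert q then wt q else 0%N)%:Z.
Proof. exact: psumS. Qed.

Lemma wHS q : wH q.+1 = wH q + (if vert q then 0%N else wt q)%:Z.
Proof. exact: psumS. Qed.

Definition gapV q := wV q - nH q.
Definition gapH q := wH q - nV q.

Definition lag (a1 a2 : nat) q := a2%:Z * nH q - a1%:Z * nV q.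

Lemma nH_add_nV q : nH q + nV q = q%:Z.
Proof.
elim: q => [|q IH]; first by rewrite /nH /nV !walk_sum0.
by rewrite nHS nVS; case: (vert q) => /=; lia.
Qed.

Lemma gapVS q : gapV q.+1 = gapV q + (if vert q then (wt q)%:Z else -1).
Proof. by rewrite /gapV wVS nHS; case: (vert q) => /=; ring. Qed.

Lemma gapHS q : gapH q.+1 = gapH q + (if vert q then -1 else (wt q)%:Z).
Proof. by rewrite /gapH wHS nVS; case: (vert q) => /=; ring. Qed.

Definition excursion (i t : nat) : Prop :=
  [/\ (i < t)%N, ~~ vert i,
      forall q, (i < q < t)%N -> gapV q < gapV i & gapV t = gapV i].

(* Induction on the window: a step that keeps gapV at its maximum is handled directly; a
   descending step starts either an excursion up to the first return, or the rest of the
   window lies strictly below the old maximum, which is then the new maximum. *)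
Lemma excursion_decomposition (Phi : nat -> int) (g : int) lo hi :
  (lo <= hi)%N -> 0 <= g ->
  (forall q, (lo <= q <= hi)%N -> gapV q <= gapV lo) ->
  (forall j, (lo <= j < hi)%N -> gapV j.+1 <= gapV j -> Phi j <= Phi j.+1) ->
  (forall i t, (lo <= i)%N -> (t <= hi)%N -> excursion i t -> Phi i + g <= Phi t) ->
  Phi lo <= Phi hi /\
  ((exists2 j, (lo <= j < hi)%N & gapV j < gapV j.+1) -> Phi lo + g <= Phi hi).
Proof.
move=> + g_ge0; have [m] := ubnP (hi - lo); elim: m lo => // m IH lo sz lohi top flat exc.
have [hilo | lo_lt_hi] := leqP hi lo.
  have -> : lo = hi by lia.
  by split=> // -[j]; lia.
have IHfrom lo' : (lo < lo' <= hi)%N -> (forall q, (lo' <= q <= hi)%N -> gapV q <= gapV lo') ->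
    Phi lo' <= Phi hi /\
    ((exists2 j, (lo' <= j < hi)%N & gapV j < gapV j.+1) -> Phi lo' + g <= Phi hi).
  move=> lo'_in top'; apply: IH => //; try lia.
  - by move=> j j_in; apply: flat; lia.
  - by move=> i t i_in t_in; apply: exc; lia.
have [flat_lo | drop_lo] := eqVneq (gapV lo.+1) (gapV lo).
  have top1 q : (lo.+1 <= q <= hi)%N -> gapV q <= gapV lo.+1.
    by move=> q_in; rewrite flat_lo; apply: top; lia.
  have [IH1 IH2] := IHfrom lo.+1 ltac:(lia) top1.
  have step := flat lo ltac:(lia) ltac:(by rewrite flat_lo).
  split=> [|[j j_in rise]]; first lia.
  have [j_lo | j_gt] : j = lo \/ (lo < j)%N by lia.
    by move: rise; rewrite j_lo flat_lo ltxx.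
  by have := IH2 ltac:(exists j => //; lia); lia.
have horiz_lo : ~~ vert lo.
  apply/negP=> vlo; move: drop_lo (top lo.+1 ltac:(lia)); rewrite gapVS vlo; lia.
have gap_lo1 : gapV lo.+1 = gapV lo - 1 by rewrite gapVS (negbTE horiz_lo).
have [[t t_in [t_ret below]] | below] := first_return_or_below gapV lo hi.
- have back : gapV t = gapV lo by have := top t ltac:(lia); lia.
  have gain : Phi lo + g <= Phi t by apply: (exc lo t); [| lia | split => //; lia].
  have [IH1 _] := IHfrom t ltac:(lia) ltac:(by move=> q q_in; rewrite back; apply: top; lia).
  by split=> [|_]; lia.
- have top1 q : (lo.+1 <= q <= hi)%N -> gapV q <= gapV lo.+1.
    by move=> q_in; rewrite gap_lo1; have := below q ltac:(lia); lia.
  have [IH1 IH2] := IHfrom lo.+1 ltac:(lia) top1.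
  have step := flat lo ltac:(lia) ltac:(lia).
  split=> [|[j j_in rise]]; first lia.
  have [j_lo | j_gt] : j = lo \/ (lo < j)%N by lia.
    by move: rise; rewrite j_lo gap_lo1; lia.
  by have := IH2 ltac:(exists j => //; lia); lia.
Qed.

(* Compatibility read on the periodic walk: gapH (h + k.+1) = gapH h says that the subpath of
   length k+1 starting at h has as many vertical edges as the S1-weight of its horizontal
   edges; gapV v.+1 = gapV (v - k) is the dual condition for the subpath ending at v. *)
Definition cyc_compatible (n : nat) : Prop :=
  forall h v, (h < v < h + n)%N -> ~~ vert h -> vert v ->
  exists2 k, (k < v - h)%N & gapH (h + k.+1) = gapH h \/ gapV v.+1 = gapV (v - k).

Lemma excursion_gapH_lt n i t : cyc_compatible n -> (t <= i + n)%N ->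
  excursion i t -> gapH t < gapH i.
Proof.
move=> compat t_le [it horiz_i below back].
have gap_i1 : gapV i.+1 = gapV i - 1 by rewrite gapVS (negbTE horiz_i).
have i1t : (i.+1 < t)%N.
  rewrite ltn_neqAle it andbT; apply/eqP=> t_eq.
  by move: back; rewrite -t_eq gap_i1; lia.
have [v t_eq] : exists v, t = v.+1 by exists t.-1; lia.
subst t.
have vert_v : vert v.
  apply: contraT => hv; have := below v ltac:(lia).
  by move: back; rewrite gapVS (negbTE hv); lia.
rewrite ltNge; apply/negP=> gapH_ret.
have [h h_in [hmin hlast]] := @ex_argmin_last gapH i v ltac:(lia).
have hv : (h < v)%N.
  rewrite ltn_neqAle; move: h_in => /andP[_ ->]; rewrite andbT.
  apply/eqP=> h_eq; subst h.
  by have := hmin i ltac:(lia); move: gapH_ret; rewrite gapHS vert_v; lia.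
have horiz_h : ~~ vert h.
  by apply/negP=> vh; have := hlast h.+1 ltac:(lia); rewrite gapHS vh; lia.
have [k kvh [ret | ret]] := compat h v ltac:(lia) horiz_h vert_v.
- by have := hlast (h + k.+1)%N ltac:(lia); rewrite ret ltxx.
- by have := below (v - k)%N ltac:(lia); rewrite -ret back ltxx.
Qed.

End Walk.

(* lag q = a2 x - a1 y for the lattice point (x, y) reached after q steps; staying in the
   strip 0 <= lag < a1 + a2 characterizes the maximal Dyck path. *)
Record graded_walk (vert : nat -> bool) (wt : nat -> nat) (n a1 a2 d1 d2 : nat) : Prop := {
  period_gt0 : (0 < n)%N;
  period_eq : n = (a1 + a2)%N;
  vert_periodic : forall j, vert (j + n)%N = vert j;
  wt_periodic : forall j, wt (j + n)%N = wt j;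
  lag_strip : forall q, (q <= n)%N -> 0 <= lag vert wt a1 a2 q < n%:Z;
  walk_compatible : cyc_compatible vert wt n;
  wtH_le : forall j, ~~ vert j -> (wt j <= d1)%N;
  wtV_le : forall j, vert j -> (wt j <= d2)%N }.

Section GradedWalk.
Variables (vert : nat -> bool) (wt : nat -> nat) (n a1 a2 d1 d2 : nat).
Hypothesis W : graded_walk vert wt n a1 a2 d1 d2.

Local Notation nV := (nV vert wt).
Local Notation nH := (nH vert wt).
Local Notation wV := (wV vert wt).
Local Notation wH := (wH vert wt).
Local Notation gapV := (gapV vert wt).
Local Notation gapH := (gapH vert wt).
Local Notation lag := (lag vert wt a1 a2).
Local Notation excursion := (excursion vert wt).

Lemma walk_sum_add_period g q :
  walk_sum vert wt g (q + n) = walk_sum vert wt g q + walk_sum vert wt g n.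
Proof. by apply: psum_add_period => j; rewrite (vert_periodic W) (wt_periodic W). Qed.

Lemma gapV_add_period q : gapV (q + n) = gapV q + gapV n.
Proof. by rewrite /gapV /wV /nH !walk_sum_add_period; ring. Qed.

Lemma gapH_add_period q : gapH (q + n) = gapH q + gapH n.
Proof. by rewrite /gapH /wH /nV !walk_sum_add_period; ring. Qed.

Lemma nH_nV_period : nH n = a1%:Z /\ nV n = a2%:Z.
Proof.
have := lag_strip W (leqnn n); have := nH_add_nV vert wt n.
rewrite /lag (period_eq W) => sum_n strip_n; nia.
Qed.

Lemma lag_add_period q : lag (q + n) = lag q.
Proof.
have [nHn nVn] := nH_nV_period.
by rewrite /lag /nH /nV !walk_sum_add_period -/(nH n) -/(nV n) nHn nVn; ring.
Qed.

Lemma lag_strip_all q : 0 <= lag q < n%:Z.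
Proof.
rewrite (periodic_mod lag_add_period); apply: (lag_strip W).
by apply: ltnW; rewrite ltn_mod (period_gt0 W).
Qed.

Lemma lagS q : lag q.+1 = lag q + (if vert q then - a1%:Z else a2%:Z).
Proof. by rewrite /lag nHS nVS; case: (vert q) => /=; ring. Qed.

Lemma lag_horiz_drop i t : ~~ vert i -> lag i - lag t < a1%:Z.
Proof.
move=> hi; have := lag_strip_all i.+1; have := lag_strip_all t.
by rewrite lagS (negbTE hi) (period_eq W); lia.
Qed.

Lemma lag_vert_drop p t : vert p -> lag p.+1 - lag t < a2%:Z.
Proof.
move=> vp; have := lag_strip_all p; have := lag_strip_all t.
by rewrite lagS vp (period_eq W); lia.
Qed.

Lemma gapV_max_window : gapV n <= 0 ->
  exists2 r, (r <= n)%N & forall q, (r <= q <= r + n)%N -> gapV q <= gapV r.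
Proof.
move=> gapVn; have [r r_in [rmax _]] := @ex_argmax_first gapV 0 n (leq0n n).
exists r => [|q q_in]; first lia.
have [q_le | q_gt] := leqP q n; first by apply: rmax; lia.
by rewrite -(subnK (ltnW q_gt)) gapV_add_period; have := rmax (q - n)%N ltac:(lia); lia.
Qed.

Lemma gapV_rise_in_window r : (r <= n)%N -> 0 < wV n ->
  exists2 j, (r <= j < r + n)%N & gapV j < gapV j.+1.
Proof.
move=> rn /psum_gt0_witness [j jn]; case vj: (vert j) => //= wt_gt0.
have rise_at k : vert k -> (0 < wt k)%N -> gapV k < gapV k.+1.
  by move=> vk wk; rewrite gapVS vk; lia.
have [rj | jr] := leqP r j; first by exists j; [lia | apply: rise_at; rewrite ?vj; lia].
exists (j + n)%N; first lia.
by apply: rise_at; rewrite ?(vert_periodic W) ?(wt_periodic W) ?vj; lia.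
Qed.

Lemma wH_le_period : wH n <= d1%:Z * a1%:Z.
Proof.
have := @wH_le_nH vert wt d1 0 n (leq0n n) (fun j _ => wtH_le W (j:=j)).
by rewrite (proj1 nH_nV_period) /wH /nH !walk_sum0 !subr0.
Qed.

Lemma wV_le_period : wV n <= d2%:Z * a2%:Z.
Proof.
have := @wV_le_nV vert wt d2 0 n (leq0n n) (fun j _ => wtV_le W (j:=j)).
by rewrite (proj2 nH_nV_period) /wV /nV !walk_sum0 !subr0.
Qed.

Lemma excursion_nV_le1 i t : (d2 * a2 <= a1)%N -> excursion i t -> nV t - nV i <= 1.
Proof.
move=> slope [it hi below back].
have no_vert p : (i <= p)%N -> (p.+1 < t)%N -> ~~ vert p.
  move=> ip pt; apply/negP=> vp.
  have := below p.+1 ltac:(lia); rewrite -back /gapV.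
  have := @wV_le_nV vert wt d2 p.+1 t ltac:(lia) (fun j _ => wtV_le W (j:=j)).
  have := lag_vert_drop t vp; rewrite /lag.
  have := @walk_sum_mono vert wt (fun b _ => b : nat) p.+1 t ltac:(lia).
  rewrite -/(nV t) -/(nV p.+1) => nV_mono lag_drop wV_bound gap_lt.
  have dV_ge0 : 0 <= nV t - nV p.+1 by rewrite subr_ge0.
  have := ler_wpM2r dV_ge0 (_ : (d2 * a2)%:Z <= a1%:Z); rewrite lez_nat => /(_ slope).
  have := ler_wpM2l (le0z_nat a2) wV_bound.
  have := ler_wpM2l (le0z_nat a2) (_ : nH t - nH p.+1 + 1 <= wV t - wV p.+1).
  by move=> /(_ ltac:(lia)); lia.
have [v t_eq] : exists v, t = v.+1 by exists t.-1; lia.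
subst t; have nV_v : nV v = nV i.
  apply/eqP; rewrite -subr_eq0 /nV /walk_sum psumB; last lia.
  rewrite big_nat_cond big1 // => j /andP[/andP[ij jv] _].
  by rewrite (negbTE (no_vert j ij _)).
by rewrite nVS nV_v; case: (vert v) => /=; lia.
Qed.

Theorem wH_wV_trapezoid : (d2 * a2 <= a1)%N -> wH n + d1%:Z * wV n <= d1%:Z * a1%:Z.
Proof.
move=> slope; have [nHn nVn] := nH_nV_period.
have [r rn top] : exists2 r, (r <= n)%N & forall q, (r <= q <= r + n)%N -> gapV q <= gapV r.
  apply: gapV_max_window; have := wV_le_period.
  by rewrite /gapV nHn -(lez_nat (d2 * a2)) PoszM in slope *; lia.
(* Phi is constant on excursions: there gapV returns, and since gapH drops while at most one
   vertical step occurs, the horizontal weight does not grow. *)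
pose Phi q := - d1%:Z * gapV q - wH q.
have Phi_add : Phi (r + n)%N = Phi r + Phi n.
  by rewrite /Phi /gapV /wV /nH /wH !walk_sum_add_period; ring.
have flat j : (r <= j < r + n)%N -> gapV j.+1 <= gapV j -> Phi j <= Phi j.+1.
  move=> _; rewrite /Phi gapVS wHS.
  case vj: (vert j) => /= gap_step.
    have -> : wt j = 0%N by lia.
    lia.
  by have := wtH_le W (negbT vj); nia.
have exc_gain i t : (r <= i)%N -> (t <= r + n)%N -> excursion i t -> Phi i + 0 <= Phi t.
  move=> ri tr exc; rewrite addr0.
  have gapH_lt : gapH t < gapH i.
    by apply: excursion_gapH_lt (walk_compatible W) _ exc; lia.
  have nV_le1 := excursion_nV_le1 slope exc.
  have wH_mono : wH i <= wH t by apply: walk_sum_mono; case: exc; lia.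
  case: exc => _ _ _ back; rewrite /Phi back.
  by move: gapH_lt; rewrite /gapH -/(wH t) -/(wH i); lia.
have [mono _] := excursion_decomposition (leq_addr n r) (lexx 0) top flat exc_gain.
move: mono; rewrite Phi_add /Phi /gapV nHn; lia.
Qed.

Theorem wH_wV_triangle : 0 < wV n -> wV n <= a1%:Z ->
  a1%:Z * wH n + (a1 * d1)%:Z * wV n < (d1 * a1 * a1)%:Z + a2%:Z * wV n.
Proof.
move=> wVn_gt0 wVn_le; have [nHn nVn] := nH_nV_period.
have [r rn top] : exists2 r, (r <= n)%N & forall q, (r <= q <= r + n)%N -> gapV q <= gapV r.
  by apply: gapV_max_window; rewrite /gapV nHn; lia.
(* On an excursion Phi grows by a2 dH - a1 dwH, where dwH < dV since gapH drops and
   a1 dV < a2 dH + a1 by the strip condition: so it grows by at least 1. *)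
pose Phi q := - (a1 * d1)%:Z * gapV q + a2%:Z * wV q - a1%:Z * wH q.
have Phi_add : Phi (r + n)%N = Phi r + Phi n.
  by rewrite /Phi /gapV /wV /nH /wH !walk_sum_add_period; ring.
have flat j : (r <= j < r + n)%N -> gapV j.+1 <= gapV j -> Phi j <= Phi j.+1.
  move=> _; rewrite /Phi gapVS wVS wHS.
  case vj: (vert j) => /= gap_step.
    have -> : wt j = 0%N by lia.
    lia.
  by have := wtH_le W (negbT vj); nia.
have exc_gain i t : (r <= i)%N -> (t <= r + n)%N -> excursion i t -> Phi i + 1 <= Phi t.
  move=> ri tr exc.
  have gapH_lt : gapH t < gapH i.
    by apply: excursion_gapH_lt (walk_compatible W) _ exc; lia.
  case: exc => _ hi _ back.
  have lag_drop := lag_horiz_drop t hi.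
  move: gapH_lt lag_drop back; rewrite /Phi /gapH /lag /gapV => gapH_lt lag_drop back.
  rewrite back; nia.
have [_ gain] := excursion_decomposition (leq_addr n r) ler01 top flat exc_gain.
have := gain (gapV_rise_in_window rn wVn_gt0); rewrite Phi_add /Phi /gapV nHn; nia.
Qed.

Theorem wH_wV_not_both_gt : ~ (a1%:Z < wV n /\ a2%:Z < wH n).
Proof.
move=> [a1_lt a2_lt]; have [nHn nVn] := nH_nV_period.
have n_gt0 := period_gt0 W.
have gapVn : 0 < gapV n by rewrite /gapV nHn; lia.
have gapHn : 0 < gapH n by rewrite /gapH nVn; lia.
have [p p_in [pmax pfirst]] := @ex_argmax_first gapV n.+1 (n + n) ltac:(lia).
have p_top q : (p - n <= q < p)%N -> gapV q < gapV p.
  move=> q_in; have [q_le | q_gt] := leqP q n; last by apply: pfirst; lia.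
  by have := pmax (q + n)%N ltac:(lia); rewrite gapV_add_period; lia.
have [v p_eq] : exists v, p = v.+1 by exists p.-1; lia.
subst p; have vert_v : vert v.
  by apply: contraT => hv; have := p_top v ltac:(lia); rewrite gapVS (negbTE hv); lia.
have [h h_in [hmin hlast]] := @ex_argmin_last gapH (v - n).+1 v ltac:(lia).
have h_bottom q : (h < q <= h + n)%N -> gapH h < gapH q.
  move=> q_in; have [q_le | q_gt] := leqP q v; first by apply: hlast; lia.
  have -> : q = (q - n + n)%N by lia.
  by have := hmin (q - n)%N ltac:(lia); rewrite gapH_add_period; lia.
have horiz_h : ~~ vert h.
  by apply/negP=> vh; have := h_bottom h.+1 ltac:(lia); rewrite gapHS vh; lia.
have hv : (h < v)%N.
  case/andP: h_in => _; rewrite leq_eqVlt => /orP[/eqP h_eq | //].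
  by rewrite h_eq vert_v in horiz_h.
have hv_near : (h < v < h + n)%N by lia.
have [k kvh [ret | ret]] := walk_compatible W hv_near horiz_h vert_v.
- by have := h_bottom (h + k.+1)%N ltac:(lia); rewrite ret ltxx.
- by have := p_top (v - k)%N ltac:(lia); rewrite ret ltxx.
Qed.

End GradedWalk.

(** * Reversal *)

Lemma mirror_reflect (T : Type) (f : nat -> T) n m j : (0 < n)%N ->
  (forall x, f (x + n)%N = f x) -> (j <= m * n + n.-1)%N ->
  f (n.-1 - j %% n)%N = f (m * n + n.-1 - j)%N.
Proof.
move=> n_gt0 per j_le; rewrite (periodic_mod per) [RHS](periodic_mod per); congr f.
have jn : (j %% n <= n.-1)%N by rewrite -ltnS prednK // ltn_mod.
apply/eqP; rewrite -(eqn_modDr j) -[in X in X == _]modnDmr !subnK //.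
by rewrite modnMDl.
Qed.

Lemma eq_walk_sum (vert : nat -> bool) (wt : nat -> nat) g g' q :
  (forall b w, g b w = g' b w) -> walk_sum vert wt g q = walk_sum vert wt g' q.
Proof. by move=> gg'; apply: eq_big_nat => j _; rewrite gg'. Qed.

(* The walk read backwards with the two kinds of steps exchanged; for the Dyck walk this is
   the walk of D_{a2,a1}. *)
Definition mirror_vert (vert : nat -> bool) (n j : nat) : bool := ~~ vert (n.-1 - j %% n)%N.
Definition mirror_wt (wt : nat -> nat) (n j : nat) : nat := wt (n.-1 - j %% n)%N.

Section Mirror.
Variables (vert : nat -> bool) (wt : nat -> nat) (n a1 a2 d1 d2 : nat).
Hypothesis W : graded_walk vert wt n a1 a2 d1 d2.

Local Notation vert' := (mirror_vert vert n).
Local Notation wt' := (mirror_wt wt n).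

Lemma mirror_walk_sum g m q : (q <= m * n + n)%N ->
  walk_sum vert' wt' g q = walk_sum vert wt (fun b w => g (~~ b) w) (m * n + n)
                           - walk_sum vert wt (fun b w => g (~~ b) w) (m * n + n - q).
Proof.
have n_gt0 := period_gt0 W.
have -> : (m * n + n = (m * n + n.-1).+1)%N by lia.
move=> q_le; rewrite /walk_sum -psum_rev //; apply: eq_big_nat => j /andP[_ jq].
by rewrite /mirror_vert /mirror_wt !(mirror_reflect (m:=m)) //; [apply: (wt_periodic W) | lia
  | apply: (vert_periodic W) | lia].
Qed.

Lemma mirror_sums m q : (q <= m * n + n)%N -> let c := (m * n + n)%N in
  [/\ nV vert' wt' q = nH vert wt c - nH vert wt (c - q),
      nH vert' wt' q = nV vert wt c - nV vert wt (c - q),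
      wV vert' wt' q = wH vert wt c - wH vert wt (c - q)
    & wH vert' wt' q = wV vert wt c - wV vert wt (c - q)].
Proof.
move=> q_le; split; rewrite /nV /nH /wV /wH (mirror_walk_sum _ q_le) //.
all: by congr (_ - _); apply: eq_walk_sum => b w /=; rewrite ?negbK ?if_neg.
Qed.

Lemma mirror_gapV m q : (q <= m * n + n)%N ->
  gapV vert' wt' q = gapH vert wt (m * n + n) - gapH vert wt (m * n + n - q).
Proof.
by move=> q_le; rewrite /gapV; case: (mirror_sums q_le) => _ -> -> _; rewrite /gapH; ring.
Qed.

Lemma mirror_gapH m q : (q <= m * n + n)%N ->
  gapH vert' wt' q = gapV vert wt (m * n + n) - gapV vert wt (m * n + n - q).
Proof.
by move=> q_le; rewrite /gapH; case: (mirror_sums q_le) => -> _ _ ->; rewrite /gapV; ring.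
Qed.

Lemma mirror_wH_period : wH vert' wt' n = wV vert wt n.
Proof.
have [_ _ _ ->] := @mirror_sums 0 n (leqnn _).
by rewrite mul0n add0n subnn /wV walk_sum0 subr0.
Qed.

Lemma mirror_wV_period : wV vert' wt' n = wH vert wt n.
Proof.
have [_ _ -> _] := @mirror_sums 0 n (leqnn _).
by rewrite mul0n add0n subnn /wH walk_sum0 subr0.
Qed.

Lemma mirror_compatible : cyc_compatible vert' wt' n.
Proof.
have n_gt0 := period_gt0 W.
move=> h v hv_near; have [c c_eq] : exists c, c = (v * n + n.-1)%N by eexists.
have vc : (v <= c)%N by rewrite c_eq; nia.
have refl_c x : (x <= c)%N -> vert (n.-1 - x %% n)%N = vert (c - x)%N.
  by rewrite c_eq; apply: mirror_reflect n_gt0 (vert_periodic W).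
rewrite /mirror_vert !refl_c ?negbK; try lia.
move=> vert_h' horiz_v'.
have hv' : (c - v < c - h < c - v + n)%N by lia.
have [k kvh [ret | ret]] := walk_compatible W hv' horiz_v' vert_h'.
- exists k; first lia; right.
  rewrite !(mirror_gapV (m:=v)); try lia.
  have -> : (v * n + n - v.+1 = c - v)%N by lia.
  have -> : (v * n + n - (v - k) = c - v + k.+1)%N by lia.
  by rewrite ret.
- exists k; first lia; left.
  rewrite !(mirror_gapH (m:=v)); try lia.
  have -> : (v * n + n - h = (c - h).+1)%N by lia.
  have -> : (v * n + n - (h + k.+1) = c - h - k)%N by lia.
  by rewrite ret.
Qed.

Theorem graded_walk_mirror : graded_walk vert' wt' n a2 a1 d2 d1.
Proof.
have n_gt0 := period_gt0 W.
split=> //.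
- by rewrite addnC; apply: (period_eq W).
- by move=> j; rewrite /mirror_vert modnDr.
- by move=> j; rewrite /mirror_wt modnDr.
- move=> q qn; have [nV' nH' _ _] := @mirror_sums 0 q ltac:(lia).
  rewrite /lag nV' nH' mul0n add0n.
  have := lag_strip_all W (n - q); have := lag_add_period W 0.
  by rewrite /lag /nH /nV !walk_sum0 add0n; lia.
- exact: mirror_compatible.
- by move=> j; rewrite /mirror_vert negbK; apply: (wtV_le W).
- by move=> j /(wtH_le W).
Qed.

End Mirror.

(** * The maximal Dyck path as a graded walk *)

Lemma proper_subpath_size (p q : seq nat) : proper_subpath p q -> (size p < size q)%N.
Proof.
case/andP=> /[dup] /size_infix; rewrite leq_eqVlt => /orP[/eqP pq_size | //] /infixP[s [s' q_eq]].
have [s_nil s'_nil] : s = [::] /\ s' = [::].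
  by move: pq_size; rewrite q_eq !size_cat => sz; split; apply/size0nil; lia.
by rewrite q_eq s_nil s'_nil cats0 eqxx.
Qed.

Section DyckWalk.
Variables (a1 a2 : nat) (S1 S2 : nat -> nat).
Local Notation n := (nedges a1 a2).

Definition dyck_edge_wt (e : nat) : nat := if is_vert a1 a2 e then S2 e else S1 e.
Definition dyck_vert (j : nat) : bool := is_vert a1 a2 (j %% n).
Definition dyck_wt (j : nat) : nat := dyck_edge_wt (j %% n).

Local Notation nV := (nV dyck_vert dyck_wt).
Local Notation nH := (nH dyck_vert dyck_wt).
Local Notation wV := (wV dyck_vert dyck_wt).
Local Notation wH := (wH dyck_vert dyck_wt).

Definition dyck_next (s : nat * nat) : bool := (s.2 < a2)%N && (s.2.+1 * a1 <= a2 * s.1)%N.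
Definition dyck_step (s : nat * nat) : nat * nat :=
  if dyck_next s then (s.1, s.2.+1) else (s.1.+1, s.2).
Definition dyck_state (q : nat) : nat * nat := iter q dyck_step (0, 0)%N.

Lemma size_dyck_aux f x y : size (dyck_aux f x y a1 a2) = f.
Proof. by elim: f x y => //= f IH x y; case: ifP => _ /=; rewrite IH. Qed.

Lemma nth_dyck_aux f x y i : (i < f)%N ->
  nth false (dyck_aux f x y a1 a2) i = dyck_next (iter i dyck_step (x, y)).
Proof.
elim: f x y i => // f IH x y [|i] if_lt; first by rewrite /= /dyck_next; case: ifP.
by rewrite iterSr /= /dyck_step /dyck_next; case: ifP => _ /=; rewrite IH.
Qed.

Lemma nedgesE : n = (a1 + a2)%N.
Proof. exact: size_dyck_aux. Qed.

Lemma is_horizE e : (e < n)%N -> is_horiz a1 a2 e = ~~ is_vert a1 a2 e.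
Proof. by rewrite /is_horiz /is_vert => ->. Qed.

Lemma dyck_vertE j : (j < n)%N -> dyck_vert j = dyck_next (dyck_state j).
Proof.
move=> jn; rewrite /dyck_vert /is_vert modn_small // jn.
by apply: nth_dyck_aux; rewrite -nedgesE.
Qed.

Lemma dyck_counts q : (q <= n)%N ->
  nH q = ((dyck_state q).1)%:Z /\ nV q = ((dyck_state q).2)%:Z.
Proof.
elim: q => [|q IH] qn; first by rewrite /nH /nV !walk_sum0.
have [IH1 IH2] := IH (ltnW qn).
rewrite nHS nVS IH1 IH2 dyck_vertE // /dyck_state iterS -/(dyck_state q).
by rewrite /dyck_step; case: dyck_next => /=; lia.
Qed.

Lemma dyck_state_inv q x y : (0 < n)%N -> (q <= n)%N -> dyck_state q = (x, y) ->
  [/\ (x + y = q)%N, (y <= a2)%N, (a1 * y <= a2 * x)%N & (a2 * x < a1 * y + n)%N].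
Proof.
rewrite nedgesE => n_gt0; elim: q x y => [|q IH] x y qn; first by case=> <- <-; split; lia.
rewrite /dyck_state iterS -/(dyck_state q); case sq: (dyck_state q) => [x0 y0].
have [sum y_le lo hi] := IH x0 y0 (ltnW qn) sq.
rewrite /dyck_step /dyck_next /=; case: ifP => [/andP[y_lt step_ok] | /negbT step_no].
  by case=> <- <-; split; nia.
case=> <- <-; move: step_no; rewrite negb_and -!ltnNge => /orP[y_ge | step_bad]; split; nia.
Qed.

Lemma dyck_lag_strip q : (0 < n)%N -> (q <= n)%N -> 0 <= lag dyck_vert dyck_wt a1 a2 q < n%:Z.
Proof.
move=> n_gt0 qn; have [nHq nVq] := dyck_counts qn.
case sq: (dyck_state q) nHq nVq => [x y] /= nHq nVq.
have [_ _ lo hi] := dyck_state_inv n_gt0 qn sq.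
by rewrite /lag nHq nVq; lia.
Qed.

Lemma dyck_window_sum (P : pred nat) (T : nat -> nat) g a c M :
  (0 < n)%N -> (a %% n = c %% n)%N ->
  (forall e, (e < n)%N -> (if P e then T e else 0%N) = g (is_vert a1 a2 e) (dyck_edge_wt e)) ->
  ((\sum_(e <- [seq (c + k) %% n | k <- iota 0 M] | P e) T e)%N)%:Z
    = walk_sum dyck_vert dyck_wt g (a + M) - walk_sum dyck_vert dyck_wt g a.
Proof.
move=> n_gt0 ac Tg.
rewrite /walk_sum psumB ?leq_addr // -{1}[a]add0n big_addn addKn big_map -natz natr_sum big_mkcond.
rewrite /index_iota subn0; apply: eq_bigr => k _.
have e_eq : ((k + a) %% n = (c + k) %% n)%N by rewrite addnC -modnDml ac modnDml.
by rewrite /dyck_vert /dyck_wt e_eq -Tg ?ltn_mod //; case: (P _); rewrite ?natz.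
Qed.

Lemma dyck_subpath_sums a c e : (0 < n)%N -> (a %% n = c %% n)%N ->
  let M := ((e + n - c) %% n).+1 in
  [/\ (nvert a1 a2 (subpath a1 a2 c e))%:Z = nV (a + M) - nV a,
      (nhoriz a1 a2 (subpath a1 a2 c e))%:Z = nH (a + M) - nH a,
      ((\sum_(x <- subpath a1 a2 c e | is_horiz a1 a2 x) S1 x)%N)%:Z = wH (a + M) - wH a
    & ((\sum_(x <- subpath a1 a2 c e | is_vert a1 a2 x) S2 x)%N)%:Z = wV (a + M) - wV a].
Proof.
move=> n_gt0 ac; rewrite /nvert /nhoriz -!sum1_count.
by split; apply: dyck_window_sum => // x xn; rewrite ?is_horizE // /dyck_edge_wt; case: is_vert.
Qed.

Lemma subpath_length x y : (0 < n)%N -> (x < n)%N -> ((y + n - x) %% n + x = y %[mod n])%N.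
Proof. by move=> n_gt0 xn; rewrite modnDml subnK ?modnDr //; lia. Qed.

Lemma dyck_compatible : (0 < n)%N -> compatible a1 a2 S1 S2 -> cyc_compatible dyck_vert dyck_wt n.
Proof.
move=> n_gt0 compat h v hv_near hh vv.
have mod_lt x : (x %% n < n)%N by rewrite ltn_mod.
have len_hv : ((v %% n + n - h %% n) %% n = v - h)%N.
  rewrite -[RHS](@modn_small _ n); last lia.
  apply/eqP; rewrite -(eqn_modDr (h %% n)%N) subnK; last by have := mod_lt h; lia.
  by rewrite modnDr modn_mod modnDmr subnK //; lia.
have size_subpath x y : size (subpath a1 a2 x y) = ((y + n - x) %% n).+1.
  by rewrite /subpath size_map size_iota.
have hh' : is_horiz a1 a2 (h %% n) by rewrite is_horizE.
have [e [en [[proper_e sums_e] | [proper_e sums_e]]]] := compat (h %% n)%N (v %% n)%N hh' vv.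
- have [K K_eq] : exists K, K = ((e + n - h %% n) %% n)%N by eexists.
  have K_lt : (K < v - h)%N.
    by have := proper_subpath_size proper_e; rewrite !size_subpath len_hv K_eq.
  exists K => //; left.
  have [nV_eq _ wH_eq _] := @dyck_subpath_sums h (h %% n)%N e n_gt0 (esym (modn_mod h n)).
  rewrite -K_eq in nV_eq wH_eq.
  by move/(congr1 Posz): sums_e; rewrite nV_eq wH_eq /gapH => sums_e; clear -sums_e; lia.
- have [K K_eq] : exists K, K = ((v %% n + n - e) %% n)%N by eexists.
  have K_lt : (K < v - h)%N.
    by have := proper_subpath_size proper_e; rewrite !size_subpath len_hv K_eq.
  have start_e : ((v - K) %% n = e %% n)%N.
    apply/eqP; rewrite -(eqn_modDr K) subnK; last lia.
    by rewrite addnC K_eq subpath_length // modn_mod.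
  exists K => //; right.
  have [_ nH_eq _ wV_eq] := @dyck_subpath_sums (v - K)%N e (v %% n)%N n_gt0 start_e.
  rewrite -K_eq in nH_eq wV_eq.
  move/(congr1 Posz): sums_e; rewrite nH_eq wV_eq (_ : (v - K + K.+1 = v.+1)%N); last lia.
  by rewrite /gapV => sums_e; clear -sums_e; lia.
Qed.

Theorem dyck_graded_walk d1 d2 : (0 < n)%N -> compatible a1 a2 S1 S2 ->
  (forall h, is_horiz a1 a2 h -> (S1 h <= d1)%N) ->
  (forall v, is_vert a1 a2 v -> (S2 v <= d2)%N) ->
  graded_walk dyck_vert dyck_wt n a1 a2 d1 d2.
Proof.
move=> n_gt0 compat S1_le S2_le; split=> //.
- exact: nedgesE.
- by move=> j; rewrite /dyck_vert modnDr.
- by move=> j; rewrite /dyck_wt modnDr.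
- by move=> q; apply: dyck_lag_strip.
- exact: dyck_compatible.
- move=> j; rewrite /dyck_vert /dyck_wt /dyck_edge_wt => /[dup] hj /negbTE ->.
  by apply: S1_le; rewrite is_horizE ?ltn_mod.
- by move=> j; rewrite /dyck_vert /dyck_wt /dyck_edge_wt => /[dup] vj ->; apply: S2_le.
Qed.

Lemma dyck_wH_period : (0 < n)%N -> wH n = (norm1 a1 a2 S1)%:Z.
Proof.
move=> n_gt0; rewrite /norm1 -natz natr_sum big_mkcond /wH /walk_sum /psum big_mkord.
apply: eq_bigr => j _; rewrite /dyck_vert /dyck_wt /dyck_edge_wt modn_small // is_horizE //.
by case: is_vert; rewrite ?natz.
Qed.

Lemma dyck_wV_period : (0 < n)%N -> wV n = (norm2 a1 a2 S2)%:Z.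
Proof.
move=> n_gt0; rewrite /norm2 -natz natr_sum big_mkcond /wV /walk_sum /psum big_mkord.
apply: eq_bigr => j _; rewrite /dyck_vert /dyck_wt /dyck_edge_wt modn_small //.
by case: is_vert; rewrite ?natz.
Qed.

End DyckWalk.

(** * Plane geometry *)

Lemma in_conv_hull_cone (p1 p2 p : pt) (c1 c2 : rat) : 0 <= c1 -> 0 <= c2 -> c1 + c2 <= 1 ->
  p.1 = c1 * p1.1 + c2 * p2.1 -> p.2 = c1 * p1.2 + c2 * p2.2 ->
  in_conv_hull [:: (0, 0); p1; p2] p.
Proof.
case: p => px py c1_ge0 c2_ge0 c12_le1 /= -> ->; exists (nth 0 [:: 1 - c1 - c2; c1; c2]).
rewrite /= !big_ord_recr !big_ord0 /=; split; [| split; [ring | split; ring]].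
by case=> [|[|[|i]]] //=; rewrite ?nth_nil //; lra.
Qed.

Lemma in_conv_hull_bilinear (p00 p10 p01 p11 p : pt) (s t : rat) : 0 <= s <= 1 -> 0 <= t <= 1 ->
  p.1 = (1 - t) * ((1 - s) * p00.1 + s * p10.1) + t * ((1 - s) * p01.1 + s * p11.1) ->
  p.2 = (1 - t) * ((1 - s) * p00.2 + s * p10.2) + t * ((1 - s) * p01.2 + s * p11.2) ->
  in_conv_hull [:: p00; p10; p01; p11] p.
Proof.
case: p => px py /andP[s0 s1] /andP[t0 t1] /= -> ->.
exists (nth 0 [:: (1 - s) * (1 - t); s * (1 - t); (1 - s) * t; s * t]).
rewrite /= !big_ord_recr !big_ord0 /=; split; [| split; [ring | split; ring]].
by case=> [|[|[|[|i]]]] //=; rewrite ?nth_nil //; nra.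
Qed.

Lemma ratio_in01 (a b : rat) : 0 <= a <= b -> 0 <= a / b <= 1 /\ a / b * b = a.
Proof.
move=> /andP[a0 ab]; have [b0 | b_neq0] := eqVneq b 0.
  have a_eq0 : a = 0 by lra.
  by rewrite a_eq0 b0 mul0r lexx ler01.
by rewrite divfK // divr_ge0 ?ler_pdivrMr ?mul1r //=; lra.
Qed.

Lemma in_trapezoid_top (B D c x y : rat) : 0 <= c -> 0 <= x -> 0 <= y <= D -> x + c * y <= B ->
  in_conv_hull [:: (0, 0); (B, 0); (0, D); (B - c * D, D)] (x, y).
Proof.
move=> c0 x0 yD xy.
have [s [s_in s_eq]] : exists s, 0 <= s <= 1 /\ s * (B - c * y) = x.
  by exists (x / (B - c * y)); apply: ratio_in01; lra.
have [t [t_in t_eq]] : exists t, 0 <= t <= 1 /\ t * D = y by exists (y / D); apply: ratio_in01.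
apply: (in_conv_hull_bilinear s_in t_in) => /=; rewrite -?s_eq -?t_eq; ring.
Qed.

Lemma in_trapezoid_right (B D c x y : rat) : 0 <= c -> 0 <= y -> 0 <= x <= B -> c * x + y <= D ->
  in_conv_hull [:: (0, 0); (B, 0); (0, D); (B, D - c * B)] (x, y).
Proof.
move=> c0 y0 xB xy.
have [s [s_in s_eq]] : exists s, 0 <= s <= 1 /\ s * B = x by exists (x / B); apply: ratio_in01.
have [t [t_in t_eq]] : exists t, 0 <= t <= 1 /\ t * (D - c * x) = y.
  by exists (y / (D - c * x)); apply: ratio_in01; lra.
apply: (in_conv_hull_bilinear s_in t_in) => /=; rewrite -?t_eq -?s_eq; ring.
Qed.

Lemma in_triangle_bottom (b a1 a2 x y : rat) : 0 < a1 -> 0 < b -> 0 <= y -> a2 * y <= a1 * x ->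
  a1 * x - a2 * y + b * y <= b * a1 -> in_conv_hull [:: (0, 0); (b, 0); (a2, a1)] (x, y).
Proof.
move=> a1_gt0 b_gt0 y_ge0 below above.
have ba1_gt0 : 0 < b * a1 by apply: mulr_gt0.
apply: (@in_conv_hull_cone _ _ _ ((a1 * x - a2 * y) / (b * a1)) (y / a1)) => /=.
- by rewrite divr_ge0 ?subr_ge0 // ltW.
- by rewrite divr_ge0 // ltW.
- have -> : (a1 * x - a2 * y) / (b * a1) + y / a1 = (a1 * x - a2 * y + b * y) / (b * a1).
    by field; rewrite !lt0r_neq0.
  by rewrite ler_pdivrMr // mul1r.
- by field; rewrite !lt0r_neq0.
- by rewrite mulr0 add0r divfK // lt0r_neq0.
Qed.

Lemma in_triangle_left (c a1 a2 x y : rat) : 0 < a2 -> 0 < c -> 0 <= x -> a1 * x <= a2 * y ->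
  a2 * y - a1 * x + c * x <= c * a2 -> in_conv_hull [:: (0, 0); (a2, a1); (0, c)] (x, y).
Proof.
move=> a2_gt0 c_gt0 x_ge0 left above.
have ca2_gt0 : 0 < c * a2 by apply: mulr_gt0.
apply: (@in_conv_hull_cone _ _ _ (x / a2) ((a2 * y - a1 * x) / (c * a2))) => /=.
- by rewrite divr_ge0 // ltW.
- by rewrite divr_ge0 ?subr_ge0 // ltW.
- have -> : x / a2 + (a2 * y - a1 * x) / (c * a2) = (a2 * y - a1 * x + c * x) / (c * a2).
    by field; rewrite !lt0r_neq0.
  by rewrite ler_pdivrMr // mul1r.
- by rewrite mulr0 addr0 divfK // lt0r_neq0.
- by field; rewrite !lt0r_neq0.
Qed.

Lemma trapezoid_a_of_bounds (d1 d2 a1 a2 x y : nat) :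
  (y <= d2 * a2)%N -> (x + d1 * y <= d1 * a1)%N ->
  in_conv_hull [:: (0, 0); ((d1 * a1)%:R, 0); (0, (d2 * a2)%:R);
                   ((d1 * a1)%:R - (d1 * d2 * a2)%:R, (d2 * a2)%:R)] (x%:R, y%:R).
Proof.
rewrite -mulnA natrM -(ler_nat rat) => y_le; rewrite -(ler_nat rat) natrD !natrM => xy_le.
by apply: in_trapezoid_top; rewrite ?ler0n //= -?natrM.
Qed.

Lemma trapezoid_b_of_bounds (d1 d2 a1 a2 x y : nat) :
  (x <= d1 * a1)%N -> (d2 * x + y <= d2 * a2)%N ->
  in_conv_hull [:: (0, 0); ((d1 * a1)%:R, 0); (0, (d2 * a2)%:R);
                   ((d1 * a1)%:R, (d2 * a2)%:R - (d1 * d2 * a1)%:R)] (x%:R, y%:R).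
Proof.
rewrite mulnAC [(d1 * a1 * d2)%N]mulnC natrM -(ler_nat rat) => x_le.
rewrite -(ler_nat rat) natrD !natrM => xy_le.
by apply: in_trapezoid_right; rewrite ?ler0n //= -?natrM.
Qed.

Lemma in_hoseg_swap (a b p : pt) : in_hoseg a b p -> in_hoseg (a.2, a.1) (b.2, b.1) (p.2, p.1).
Proof. by case=> t [t_in [e1 e2]]; exists t. Qed.

Lemma edge_excluded (d a1 a2 x y : nat) : (0 < a1)%N ->
  ((0 < y <= a1)%N -> (a1 * x + a1 * d * y < d * a1 * a1 + a2 * y)%N) ->
  ~ in_hoseg ((d * a1)%:R, 0) (a2%:R, a1%:R) (x%:R, y%:R).
Proof.
move=> a1_gt0 strict [t [/andP[t_gt0 t_le1] [/= x_eq y_eq]]].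
rewrite mulr0 add0r in y_eq.
have y_in : (0 < y <= a1)%N.
  rewrite -(ltr_nat rat) -(ler_nat rat) y_eq; apply/andP; split.
    by apply: mulr_gt0; rewrite // ltr0n.
  by rewrite ler_piMl // ler0n.
have := strict y_in; rewrite -(ltr_nat rat) !natrD !natrM x_eq y_eq.
by rewrite natrM; lra.
Qed.

Lemma quad_of_bounds (d1 d2 a1 a2 x y : nat) : (0 < a1 < d2 * a2)%N -> (0 < a2 < d1 * a1)%N ->
  (x <= d1 * a1)%N -> (y <= d2 * a2)%N ->
  ((0 < y <= a1)%N -> (a1 * x + a1 * d1 * y < d1 * a1 * a1 + a2 * y)%N) ->
  ((0 < x <= a2)%N -> (a2 * y + a2 * d2 * x < d2 * a2 * a2 + a1 * x)%N) ->
  ~ ((a1 < y)%N /\ (a2 < x)%N) ->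
  in_quad (0, 0) ((d1 * a1)%:R, 0) (a2%:R, a1%:R) (0, (d2 * a2)%:R) (x%:R, y%:R).
Proof.
move=> /andP[a1_gt0 a1_lt] /andP[a2_gt0 a2_lt] x_le y_le strict1 strict2 not_both.
have [/andP[y_le_a1 below] | not_bottom] := boolP ((y <= a1) && (a2 * y <= a1 * x))%N.
  left; apply: in_triangle_bottom; rewrite ?ltr0n ?ler0n -?natrM ?ler_nat //; first nia.
  have : (a1 * x + d1 * a1 * y <= d1 * a1 * a1 + a2 * y)%N.
    by have [->|y_gt0] := posnP y; [nia | have := strict1 ltac:(lia); lia].
  by rewrite -(ler_nat rat) !natrD !natrM; lra.
have [/andP[x_le_a2 left] | not_left] := boolP ((x <= a2) && (a1 * x <= a2 * y))%N.
  right; apply: in_triangle_left; rewrite ?ltr0n ?ler0n -?natrM ?ler_nat //; first nia.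
  have : (a2 * y + d2 * a2 * x <= d2 * a2 * a2 + a1 * x)%N.
    by have [->|x_gt0] := posnP x; [nia | have := strict2 ltac:(lia); lia].
  by rewrite -(ler_nat rat) !natrD !natrM; lra.
exfalso; apply: not_both.
by move: not_bottom not_left; rewrite !negb_and -!ltnNge => /orP[] ? /orP[] ?; split; nia.
Qed.

Lemma region_c_of_bounds (d1 d2 a1 a2 x y : nat) : (0 < a1 < d2 * a2)%N -> (0 < a2 < d1 * a1)%N ->
  (x <= d1 * a1)%N -> (y <= d2 * a2)%N ->
  ((0 < y <= a1)%N -> (a1 * x + a1 * d1 * y < d1 * a1 * a1 + a2 * y)%N) ->
  ((0 < x <= a2)%N -> (a2 * y + a2 * d2 * x < d2 * a2 * a2 + a1 * x)%N) ->
  ~ ((a1 < y)%N /\ (a2 < x)%N) ->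
  region_c d1 d2 a1 a2 (x%:R, y%:R).
Proof.
move=> a1_in a2_in x_le y_le strict1 strict2 not_both; split; first exact: quad_of_bounds.
have [a1_gt0 a2_gt0] : (0 < a1)%N /\ (0 < a2)%N by lia.
split; first exact: edge_excluded.
by move/in_hoseg_swap; apply: edge_excluded.
Qed.

Lemma dyck_norm_bounds d1 d2 a1 a2 S1 S2 :
  compatible a1 a2 S1 S2 ->
  (forall h, is_horiz a1 a2 h -> (S1 h <= d1)%N) ->
  (forall v, is_vert a1 a2 v -> (S2 v <= d2)%N) ->
  let x := norm1 a1 a2 S1 in let y := norm2 a1 a2 S2 in
  [/\ (x <= d1 * a1)%N, (y <= d2 * a2)%N,
      (d2 * a2 <= a1)%N -> (x + d1 * y <= d1 * a1)%N,
      (d1 * a1 <= a2)%N -> (d2 * x + y <= d2 * a2)%N &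
      [/\ (0 < y <= a1)%N -> (a1 * x + a1 * d1 * y < d1 * a1 * a1 + a2 * y)%N,
          (0 < x <= a2)%N -> (a2 * y + a2 * d2 * x < d2 * a2 * a2 + a1 * x)%N &
          ~ ((a1 < y)%N /\ (a2 < x)%N)]].
Proof.
move=> compat S1_le S2_le x y.
have [n_eq0 | n_gt0] := posnP (nedges a1 a2).
  have [a1_0 a2_0] : a1 = 0%N /\ a2 = 0%N by move: n_eq0; rewrite nedgesE; lia.
  have [x_0 y_0] : x = 0%N /\ y = 0%N by rewrite /x /y /norm1 /norm2 n_eq0 !big_ord0.
  by rewrite x_0 y_0 a1_0 a2_0 !muln0; split=> //; split=> //; case.
have W := dyck_graded_walk n_gt0 compat S1_le S2_le.
have Wm := graded_walk_mirror W.
have := wH_le_period W; have := wV_le_period W.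
have := wH_wV_trapezoid W; have := wH_wV_trapezoid Wm.
have := wH_wV_triangle W; have := wH_wV_triangle Wm.
have := wH_wV_not_both_gt W.
rewrite (mirror_wH_period W) (mirror_wV_period W) dyck_wH_period // dyck_wV_period // -/x -/y.
move=> not_both tri_b tri_a trap_b trap_a y_le x_le.
split; [lia | lia | move=> ?; nia | move=> ?; nia | split; [move=> ?; nia | move=> ?; nia | lia]].
Qed.

Theorem proposition4p22 (d1 d2 a1 a2 : nat) (S1 S2 : nat -> nat) :
  compatible a1 a2 S1 S2 ->
  (forall h, is_horiz a1 a2 h -> (S1 h <= d1)%N) ->
  (forall v, is_vert a1 a2 v -> (S2 v <= d2)%N) ->
  [/\ ((d2 * a2 <= a1)%N ->
        in_conv_hull
          [:: (0, 0); ((d1 * a1)%:R, 0); (0, (d2 * a2)%:R);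
              ((d1 * a1)%:R - (d1 * d2 * a2)%:R, (d2 * a2)%:R)]
          ((norm1 a1 a2 S1)%:R, (norm2 a1 a2 S2)%:R)),
      ((d1 * a1 <= a2)%N ->
        in_conv_hull
          [:: (0, 0); ((d1 * a1)%:R, 0); (0, (d2 * a2)%:R);
              ((d1 * a1)%:R, (d2 * a2)%:R - (d1 * d2 * a1)%:R)]
          ((norm1 a1 a2 S1)%:R, (norm2 a1 a2 S2)%:R))
    & ((0 < a1 < d2 * a2)%N -> (0 < a2 < d1 * a1)%N ->
        region_c d1 d2 a1 a2 ((norm1 a1 a2 S1)%:R, (norm2 a1 a2 S2)%:R))].
Proof.
move=> compat S1_le S2_le.
have [x_le y_le trap_a trap_b [tri_a tri_b not_both]] := dyck_norm_bounds compat S1_le S2_le.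
split=> [slope | slope | a1_in a2_in].
- exact: trapezoid_a_of_bounds (trap_a slope).
- exact: trapezoid_b_of_bounds (trap_b slope).
- exact: region_c_of_bounds.
Qed.
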